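(* Let $I_1,\dots,I_t\subset S$ be monomial ideals, where each $I_j$ is generated in a single degree $d_j$, $d_1\le\cdots\le d_t$, and each $I_j$ has linear quotients with respect to a fixed ordering of $\mathcal{G}(I_j)$. Suppose the following property $( * )$ holds: for all $u\in\mathcal{G}(I_i)$ and $v\in\mathcal{G}(I_j)$ with $i<j$ and $\deg(u:v)>1$, there exists a monomial $w$ belonging to $(I_1\cup\cdots\cup I_{j-1})\cup\{w\in\mathcal{G}(I_j): w \text{ precedes } v \text{ in the fixed linear quotients order of } I_j\}$ such that $\deg(w:v)=1$ and $w:v$ divides $u:v$. Then $I=I_1+\cdots+I_t$ has linear quotients.
   Context: $S=K[x_1,\dots,x_n]$. For a monomial ideal $I$, $\mathcal{G}(I)$ is its minimal monomial generating set. A monomial ideal $I$ has linear quotients if $\mathcal{G}(I)$ can be ordered $u_1,\dots,u_s$ so that for each $i=2,\dots,s$ the colon ideal $(u_1,\dots,u_{i-1}):(u_i)$ is generated by variables; such an ordering is a linear quotients order. For monomials $u,v$, $u:v=u/\gcd(u,v)$. *)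

From mathcomp Require Import all_boot.
Set Implicit Arguments. Unset Strict Implicit. Unset Printing Implicit Defensive.

(* Monomials of S = K[x_1,...,x_n], encoded by exponent vectors. *)
Definition mono (n : nat) := {ffun 'I_n -> nat}.

Section Monomials.
Variable n : nat.
Implicit Types u v w m : mono n.

Definition mdvd u v : bool := [forall i, u i <= v i].
Definition mdeg u : nat := \sum_(i < n) u i.
Definition mmul u v : mono n := [ffun i => u i + v i].
(* u : v = u / gcd(u, v) *)
Definition mcolon u v : mono n := [ffun i => u i - v i].
Definition mvar (l : 'I_n) : mono n := [ffun i => nat_of_bool (i == l)].

(* A monomial ideal is represented by the set of monomials it contains. *)
Definition mideal := mono n -> Prop.

Definition ideal_of (F : seq (mono n)) : mideal := fun m => has (fun g => mdvd g m) F.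

Definition mingen (I : mideal) u : Prop :=
  I u /\ forall v, I v -> mdvd v u -> v = u.

Definition is_mingens_order (I : mideal) (s : seq (mono n)) : Prop :=
  uniq s /\ forall u, u \in s <-> mingen I u.

Definition gen_by_vars (J : mideal) : Prop :=
  exists L : {set 'I_n}, forall m, J m <-> exists2 l, l \in L & 0 < m l.

(* The colon ideal (u_1,...,u_{i-1}) : (u_i), as a set of monomials. *)
Definition colon_prefix (s : seq (mono n)) (i : nat) : mideal :=
  fun m => ideal_of (take i s) (mmul m (nth [ffun => 0%N] s i)).

Definition lq_order (s : seq (mono n)) : Prop :=
  forall i, 0 < i < size s -> gen_by_vars (colon_prefix s i).

Definition has_linear_quotients (I : mideal) : Prop :=
  exists s, is_mingens_order I s /\ lq_order s.

End Monomials.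

From mathcomp Require Import all_boot zify.
Set Implicit Arguments. Unset Strict Implicit. Unset Printing Implicit Defensive.

(* Order the minimal generators of I by their first position in the concatenation of the
   lists G_1, ..., G_t.  For linear quotients it suffices that every u preceding v admits a
   preceding g such that g:v is a variable dividing u:v.  If u comes from an earlier ideal
   this is ( * ); if u and v come from the same I_j, the linear quotients of I_j give such a w.
   In both cases w is divisible by a minimal generator g of I, and g still precedes v: a proper
   divisor of a generator of I_k has smaller degree and so comes from an earlier I_k'. *)

Section MonomialArithmetic.
Variable n : nat.
Implicit Types u v w x y m : mono n.

Lemma mdvdP u v : reflect (forall i, u i <= v i) (mdvd u v).
Proof. exact: forallP. Qed.

Lemma mdvd_refl u : mdvd u u.
Proof. by apply/mdvdP. Qed.

Lemma mdvd_trans v u w : mdvd u v -> mdvd v w -> mdvd u w.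
Proof. by move=> /mdvdP uv /mdvdP vw; apply/mdvdP=> i; apply: leq_trans (uv i) (vw i). Qed.

Lemma mdeg_dvd u v : mdvd u v -> mdeg u <= mdeg v.
Proof. by move=> /mdvdP uv; apply: leq_sum => i _. Qed.

Lemma mdvd_mdeg_eq u v : mdvd u v -> mdeg v <= mdeg u -> u = v.
Proof.
move=> /mdvdP uv vu; apply/ffunP=> i; apply/eqP; rewrite eqn_leq uv /=.
rewrite leqNgt; apply: contraL vu => lt_ui; rewrite -ltnNge /mdeg.
rewrite (bigD1 i) //= [X in _ < X](bigD1 i) //= -addSn.
by rewrite leq_add // leq_sum.
Qed.

Lemma mdvd_anti u v : mdvd u v -> mdvd v u -> u = v.
Proof. by move=> uv /mdeg_dvd; apply: mdvd_mdeg_eq. Qed.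

Lemma mcolon_dvdl v u w : mdvd u w -> mdvd (mcolon u v) (mcolon w v).
Proof. by move=> /mdvdP uw; apply/mdvdP=> i; rewrite !ffunE leq_sub2r. Qed.

Lemma mdeg_mcolon_eq0 u v : (mdeg (mcolon u v) == 0) = mdvd u v.
Proof.
rewrite /mdeg sum_nat_eq0; apply/forallP/mdvdP=> h i; have := h i.
  by rewrite ffunE subn_eq0.
by rewrite ffunE -subn_eq0.
Qed.

Lemma mdvd_mmul_mcolon u m v : mdvd u (mmul m v) = mdvd (mcolon u v) m.
Proof. by apply/mdvdP/mdvdP=> h i; have := h i; rewrite !ffunE; lia. Qed.

Lemma mdeg_mvar (l : 'I_n) : mdeg (mvar l) = 1.
Proof.
rewrite /mdeg (bigD1 l) //= big1 => [|i il]; first by rewrite ffunE eqxx.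
by rewrite ffunE (negbTE il).
Qed.

Lemma mdeg_gt0_support x : 0 < mdeg x -> exists l, 0 < x l.
Proof.
rewrite lt0n /mdeg sum_nat_eq0 => /forallPn[l]; rewrite -lt0n.
by exists l.
Qed.

Lemma mdeg1_dvd_mvar x (l : 'I_n) : mdeg x = 1 -> 0 < x l -> mdvd x (mvar l).
Proof.
move=> x1 xl; apply/mdvdP=> i; move: x1; rewrite ffunE /mdeg (bigD1 l) //=.
case: (eqVneq i l) => [->|il]; first lia.
by rewrite (bigD1 i) //=; lia.
Qed.

Lemma mdvd_mvar_dvd x y (l : 'I_n) : mdvd x (mvar l) -> 0 < y l -> mdvd x y.
Proof.
move=> /mdvdP xl yl; apply/mdvdP=> i; have := xl i; rewrite ffunE.
by case: eqP => [->|_]; lia.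
Qed.

Definition colon_var_dvd g u v := mdeg (mcolon g v) = 1 /\ mdvd (mcolon g v) (mcolon u v).

Lemma colon_var_dvd_trans v w g u :
  colon_var_dvd g w v -> colon_var_dvd w u v -> colon_var_dvd g u v.
Proof. by move=> [g1 gw] [_ wu]; split => //; apply: mdvd_trans wu. Qed.

Lemma colon_var_dvd_dvdl v g w :
  mdvd g w -> ~~ mdvd g v -> mdeg (mcolon w v) = 1 -> colon_var_dvd g w v.
Proof.
move=> gw gNv w1; have gwv := mcolon_dvdl v gw; split => //.
apply/eqP; rewrite eqn_leq lt0n mdeg_mcolon_eq0 gNv andbT -w1.
exact: mdeg_dvd.
Qed.

Lemma colon_var_dvd_self u v : ~~ mdvd u v -> mdeg (mcolon u v) <= 1 -> colon_var_dvd u u v.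
Proof.
move=> uNv uv1; split; last exact: mdvd_refl.
by apply/eqP; rewrite eqn_leq uv1 lt0n mdeg_mcolon_eq0.
Qed.

End MonomialArithmetic.

Section ColonPrefix.
Variables (n : nat) (s : seq (mono n)) (i : nat).
Let v := nth [ffun => 0] s i.

Lemma colon_prefix_gen_by_vars :
  (forall u, u \in take i s -> exists2 g, g \in take i s & colon_var_dvd g u v) ->
  gen_by_vars (colon_prefix s i).
Proof.
move=> wit.
exists [set l | has (fun g => (mdeg (mcolon g v) == 1) && (0 < mcolon g v l)) (take i s)].
move=> m; rewrite /colon_prefix /ideal_of -/v; split.
- case/hasP=> u uin; rewrite mdvd_mmul_mcolon => uvm.
  have [g gin [g1 gu]] := wit u uin.
  have [l gl] : exists l, 0 < mcolon g v l by apply: mdeg_gt0_support; rewrite g1.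
  exists l; first by rewrite inE; apply/hasP; exists g; rewrite // g1 eqxx.
  by move/mdvdP: (mdvd_trans gu uvm) => /(_ l); apply: leq_trans.
- case=> l; rewrite inE => /hasP[g gin /andP[/eqP g1 gl]] ml.
  apply/hasP; exists g => //; rewrite mdvd_mmul_mcolon.
  exact: mdvd_mvar_dvd (mdeg1_dvd_mvar g1 gl) ml.
Qed.

Lemma colon_prefix_var_witness u :
  gen_by_vars (colon_prefix s i) -> {in take i s, forall w, ~~ mdvd w v} ->
  u \in take i s -> exists2 w, w \in take i s & colon_var_dvd w u v.
Proof.
move=> [L hL] Ndvd uin.
have [l lL uvl] : exists2 l, l \in L & 0 < mcolon u v l.
  apply/hL; apply/hasP; exists u => //.
  by rewrite -/v mdvd_mmul_mcolon mdvd_refl.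
have /hasP[w win] : colon_prefix s i (mvar l) by apply/hL; exists l; rewrite ?ffunE ?eqxx.
rewrite -/v mdvd_mmul_mcolon => wvl; exists w => //.
have wv1 : mdeg (mcolon w v) = 1.
  apply/eqP; rewrite eqn_leq -{1}(mdeg_mvar l) mdeg_dvd //=.
  by rewrite lt0n mdeg_mcolon_eq0 Ndvd.
by split; last exact: mdvd_mvar_dvd wvl uvl.
Qed.

End ColonPrefix.

Lemma mem_take_sorted_key (T : eqType) (key : T -> nat) (s : seq T) x0 i u :
  sorted ltn (map key s) -> i < size s -> u \in s ->
  (u \in take i s) = (key u < key (nth x0 s i)).
Proof.
move=> s_sorted lt_is us; rewrite in_take //.
have lt_us : index u s < size s by rewrite index_mem.
have lt_nth := sorted_ltn_nth ltn_trans 0 s_sorted.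
rewrite -{2}(nth_index x0 us) -!(nth_map x0 0) //.
case: (ltngtP (index u s) i) => [ui|iu|->]; last by rewrite ltnn.
- by rewrite lt_nth // inE size_map.
- by apply/esym/negbTE; rewrite -leqNgt ltnW // lt_nth // inE size_map.
Qed.

Definition generated_by (n : nat) (I : mideal n) (F : seq (mono n)) :=
  forall m, I m <-> ideal_of F m.

Definition minimal_in (n : nat) (F : seq (mono n)) (x : mono n) :=
  all (fun g => mdvd g x ==> (g == x)) F.

Lemma ideal_of_mem (n : nat) (F : seq (mono n)) g : g \in F -> ideal_of F g.
Proof. by move=> gF; apply/hasP; exists g; rewrite ?mdvd_refl. Qed.

Section Generators.
Variables (n : nat) (I : mideal n) (F : seq (mono n)).
Hypothesis IF : generated_by I F.

Lemma mingenP x : mingen I x <-> x \in F /\ minimal_in F x.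
Proof.
have Imem g : g \in F -> I g by move=> gF; apply/IF/ideal_of_mem.
split=> [[/IF/hasP[g gF gx] xmin]|[xF xmin]].
  have ex := xmin g (Imem g gF) gx; subst x; split=> //.
  by apply/allP=> h hF; apply/implyP=> hg; rewrite (xmin h (Imem h hF) hg).
split=> [|v /IF/hasP[h hF hv] vx]; first exact: Imem.
have /eqP hx := implyP (allP xmin h hF) (mdvd_trans hv vx).
by apply: mdvd_anti vx _; rewrite -hx.
Qed.

Lemma mingen_dvd_exists x : I x -> exists2 g, mingen I g & mdvd g x.
Proof.
move=> /IF/hasP[g0 g0F g0x].
suff [g gmin gg0] : exists2 g, mingen I g & mdvd g g0 by exists g; last exact: mdvd_trans g0x.
elim: (mdeg g0).+1 {-2}g0 (ltnSn (mdeg g0)) g0F => // k IH g gk gF.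
have [gmin|] := boolP (minimal_in F g).
  by exists g; [apply/mingenP | apply: mdvd_refl].
case/allPn=> h hF; rewrite negb_imply => /andP[hg hNg].
have hlt : mdeg h < mdeg g.
  by rewrite ltnNge; apply: contra hNg => gh; rewrite (mdvd_mdeg_eq hg gh).
have [g' g'min g'h] := IH h (leq_trans hlt gk) hF.
by exists g'; last exact: mdvd_trans hg.
Qed.

Lemma linear_quotients_by_key (key : mono n -> nat) : {in F &, injective key} ->
  (forall u v, mingen I u -> mingen I v -> key u < key v ->
     exists g, [/\ mingen I g, key g < key v & colon_var_dvd g u v]) ->
  has_linear_quotients I.
Proof.
move=> key_inj wit.
pose s := sort (fun a b => key a <= key b) [seq x <- undup F | minimal_in F x].
have memsE x : (x \in s) = (x \in F) && minimal_in F x.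
  by rewrite mem_sort mem_filter mem_undup andbC.
have mems x : x \in s <-> mingen I x by rewrite mingenP memsE; split=> /andP.
have s_sorted : sorted ltn (map key s).
  rewrite ltn_sorted_uniq_leq map_inj_in_uniq ?sort_uniq ?filter_uniq ?undup_uniq //=.
    by rewrite sorted_map; apply: sort_sorted => a b; apply: leq_total.
  by move=> a b; rewrite !memsE => /andP[aF _] /andP[bF _]; apply: key_inj.
exists s; split.
  by split; first by rewrite sort_uniq filter_uniq ?undup_uniq.
move=> i /andP[_ lt_is]; apply: colon_prefix_gen_by_vars => u uin.
have vs := mem_nth [ffun => 0] lt_is; have us := mem_take uin.
rewrite (mem_take_sorted_key [ffun => 0] s_sorted lt_is us) in uin.
have [g [gmin gv gu]] := wit _ _ ((mems u).1 us) ((mems _).1 vs) uin.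
by exists g; rewrite // (mem_take_sorted_key [ffun => 0] s_sorted lt_is ((mems g).2 gmin)).
Qed.

End Generators.

Section BlockOffsets.
Variables (T : eqType) (ss : seq (seq T)).

Definition block_offset k := sumn (take k (map size ss)).

Lemma leq_index_flatten k x : x \in nth [::] ss k ->
  index x (flatten ss) <= block_offset k + index x (nth [::] ss k).
Proof.
rewrite /block_offset; elim: ss k => [|s ss' IH] [|k] //=; rewrite index_cat.
- by move=> ->.
- move=> /IH le_x; case: ifP => [xs|_]; last by rewrite -addnA leq_add2l.
  by have := index_mem x s; rewrite xs; lia.
Qed.

Lemma index_flatten x : x \in flatten ss ->
  exists2 k, x \in nth [::] ss k & index x (flatten ss) = block_offset k + index x (nth [::] ss k).
Proof.
rewrite /block_offset; elim: ss => [|s ss' IH] //=; rewrite mem_cat index_cat.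
have [xs _|xNs /= /IH[k xk ->]] := boolP (x \in s); first by exists 0; rewrite ?xs.
by exists k.+1; rewrite //= addnA.
Qed.

Lemma leq_block_offset k k' : k < k' -> block_offset k + size (nth [::] ss k) <= block_offset k'.
Proof.
rewrite /block_offset; elim: ss k k' => [|s ss' IH] [|k] [|k'] //= lt_kk'.
  by rewrite add0n leq_addr.
by rewrite -addnA leq_add2l IH.
Qed.

End BlockOffsets.

Section SumOfIdeals.
Variables (n t : nat) (G : 'I_t -> seq (mono n)) (d : 'I_t -> nat).
Hypothesis G_mingens : forall j, is_mingens_order (ideal_of (G j)) (G j).
Hypothesis G_deg : forall j u, u \in G j -> mdeg u = d j.
Hypothesis d_mono : forall i j : 'I_t, i <= j -> d i <= d j.

Let I : mideal n := fun m => exists j, ideal_of (G j) m.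
Let blocks := [seq G j | j <- enum 'I_t].
Let flat := flatten blocks.
Let key x := index x flat.
Let pos (j : 'I_t) x := block_offset blocks j + index x (G j).

Lemma sum_generated : generated_by I flat.
Proof.
move=> m; split=> [[j /hasP[g gj gm]]|/hasP[g /flatten_mapP[j _ gj] gm]].
  by apply/hasP; exists g => //; apply/flatten_mapP; exists j; rewrite ?mem_enum.
by exists j; apply/hasP; exists g.
Qed.

Lemma nth_blocks (j : 'I_t) : nth [::] blocks j = G j.
Proof. by rewrite (nth_map j) ?size_enum_ord // nth_ord_enum. Qed.

Lemma key_le_pos j x : x \in G j -> key x <= pos j x.
Proof. by rewrite /pos -!nth_blocks; apply: leq_index_flatten. Qed.

Lemma pos_lt_offset (k j : 'I_t) x : k < j -> x \in G k -> pos k x < block_offset blocks j.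
Proof.
move=> kj xk; apply: leq_trans (leq_block_offset _ kj).
by rewrite /pos nth_blocks ltn_add2l index_mem.
Qed.

Lemma mingen_key x : mingen I x -> exists2 j, x \in G j & key x = pos j x.
Proof.
case/(mingenP sum_generated) => /index_flatten[k xk kx] _.
have kt : k < t.
  by rewrite ltnNge; apply: contraL xk => tk; rewrite nth_default // size_map size_enum_ord.
by exists (Ordinal kt); rewrite /key /pos -nth_blocks.
Qed.

Lemma mingen_Ndvd g v : mingen I g -> mingen I v -> key g < key v -> ~~ mdvd g v.
Proof. by move=> [Ig _] [_ vmin] gv; apply/negP=> /(vmin g Ig) eq_gv; rewrite eq_gv ltnn in gv. Qed.

(* A proper divisor of [g0 \in G k] has smaller degree, so, the degrees [d] being monotone,
   it can only come from an earlier block. *)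
Lemma mingen_below k g0 : g0 \in G k ->
  exists g, [/\ mingen I g, mdvd g g0 & key g <= pos k g0].
Proof.
move=> g0k; have [|g gmin gg0] := mingen_dvd_exists sum_generated (x := g0).
  by exists k; apply: ideal_of_mem.
exists g; split=> //; have [->|ne] := eqVneq g g0; first exact: key_le_pos g0k.
have [k' gk' ->] := mingen_key gmin.
have lt_deg : mdeg g < mdeg g0.
  by rewrite ltnNge; apply: contra ne => g0g; rewrite (mdvd_mdeg_eq gg0 g0g).
have k'k : k' < k.
  by rewrite ltnNge; apply: contraL lt_deg => /d_mono; rewrite (G_deg gk') (G_deg g0k) -leqNgt.
by apply/ltnW/(leq_trans (pos_lt_offset k'k gk')); apply: leq_addr.
Qed.

Lemma reduce_to_mingen v k g0 w : mingen I v -> g0 \in G k -> mdvd g0 w ->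
  pos k g0 < key v -> mdeg (mcolon w v) = 1 ->
  exists g, [/\ mingen I g, key g < key v & colon_var_dvd g w v].
Proof.
move=> vmin g0k g0w g0v w1; have [g [gmin gg0 gk]] := mingen_below g0k.
have gv : key g < key v by apply: leq_ltn_trans g0v.
exists g; split=> //; apply: colon_var_dvd_dvdl w1.
  exact: mdvd_trans g0w.
exact: mingen_Ndvd gv.
Qed.

Lemma reduce_precedes_to_mingen (j : 'I_t) v w : mingen I v -> v \in G j -> key v = pos j v ->
  (exists2 k : 'I_t, k < j & ideal_of (G k) w) \/ (w \in G j /\ index w (G j) < index v (G j)) ->
  mdeg (mcolon w v) = 1 -> exists g, [/\ mingen I g, key g < key v & colon_var_dvd g w v].
Proof.
move=> vmin vj kv [[k kj /hasP[g0 g0k g0w]]|[wj wv]] w1.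
  apply: (reduce_to_mingen vmin g0k g0w _ w1); rewrite kv.
  exact: leq_trans (pos_lt_offset kj g0k) (leq_addr _ _).
by apply: (reduce_to_mingen vmin wj (mdvd_refl w) _ w1); rewrite kv ltn_add2l.
Qed.

Lemma take_index_Ndvd j v : v \in G j -> {in take (index v (G j)) (G j), forall w, ~~ mdvd w v}.
Proof.
move=> vj w win; apply/negP=> wv.
have [_ /(_ v) [/(_ vj) [_ vmin] _]] := G_mingens j.
have eq_wv := vmin w (ideal_of_mem (mem_take win)) wv.
by rewrite eq_wv in_take // ltnn in win.
Qed.

End SumOfIdeals.

Theorem lemma3p1 (n t : nat) (G : 'I_t -> seq (mono n)) (d : 'I_t -> nat) :
  (forall j, is_mingens_order (ideal_of (G j)) (G j)) ->
  (forall j u, u \in G j -> mdeg u = d j) ->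
  (forall i j : 'I_t, (i <= j)%N -> (d i <= d j)%N) ->
  (forall j, lq_order (G j)) ->
  (forall (i j : 'I_t) (u v : mono n), (i < j)%N -> u \in G i -> v \in G j ->
     (1 < mdeg (mcolon u v))%N ->
     exists w : mono n,
       ((exists2 k : 'I_t, (k < j)%N & ideal_of (G k) w) \/
        (w \in G j /\ (index w (G j) < index v (G j))%N)) /\
       mdeg (mcolon w v) = 1%N /\ mdvd (mcolon w v) (mcolon u v)) ->
  has_linear_quotients (fun m => exists j : 'I_t, ideal_of (G j) m).
Proof.
move=> G_mingens G_deg d_mono G_lq star.
apply: (linear_quotients_by_key (sum_generated G) (@index_inj _ [ffun => 0] _)) => u v umin vmin uv.
have [i ui ku] := mingen_key umin; have [j vj kv] := mingen_key vmin.
have reduce := reduce_precedes_to_mingen G_deg d_mono vmin vj kv.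
have uNv := mingen_Ndvd umin vmin uv.
case: (ltngtP i j) => [ij|ji|/val_inj eq_ij].
- have [uv1|uv1] := leqP (mdeg (mcolon u v)) 1.
    by exists u; split; last exact: colon_var_dvd_self.
  have [w [w_prec [w1 wu]]] := star i j u v ij ui vj uv1.
  have [g [gmin gv gw]] := reduce w w_prec w1.
  by exists g; split; last exact: colon_var_dvd_trans gw (conj w1 wu).
- by have := pos_lt_offset ji vj; lia.
subst i; set p := index v (G j).
have up : index u (G j) < p by lia.
have p_range : 0 < p < size (G j) by rewrite index_mem vj andbT (leq_ltn_trans _ up).
have u_early : u \in take p (G j) by rewrite in_take.
have Ndvd : {in take p (G j), forall w, ~~ mdvd w (nth [ffun => 0] (G j) p)}.
  by rewrite nth_index //; apply: take_index_Ndvd.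
have [w w_early] := colon_prefix_var_witness (G_lq j p p_range) Ndvd u_early.
rewrite nth_index // => -[w1 wu].
have w_prec : w \in G j /\ index w (G j) < p by rewrite -in_take ?(mem_take w_early).
have [g [gmin gv gw]] := reduce w (or_intror w_prec) w1.
by exists g; split; last exact: colon_var_dvd_trans gw (conj w1 wu).
Qed.
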